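(* Let $G$ be a solvable group of derived length $d$. (i) If $\exp(G)$ is odd, then $\exp(G\otimes G)$ divides $(\exp(G))^d$; in particular $\exp(M(G))$ divides $(\exp(G))^d$. (ii) If $\exp(G)$ is even, then $\exp(G\otimes G)$ divides $2^{d-1}(\exp(G))^d$; in particular $\exp(M(G))$ divides $2^{d-1}(\exp(G))^d$.
   Context: Conventions: ${}^g h = ghg^{-1}$, $[g,h]=ghg^{-1}h^{-1}$. The nonabelian tensor square $G\otimes G$ is the group generated by symbols $g\otimes h$ ($g,h\in G$) subject to $gg'\otimes h=({}^g g'\otimes {}^g h)(g\otimes h)$ and $g\otimes hh'=(g\otimes h)({}^h g\otimes {}^h h')$. $M(G)\cong H_2(G,\mathbb{Z})$ is the Schur multiplier. *)

From Stdlib Require Import List Arith PeanoNat.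
Import ListNotations.

Record is_group (G : Type) (mul : G -> G -> G) (inv : G -> G) (one : G) : Prop := {
  grp_assoc : forall x y z, mul x (mul y z) = mul (mul x y) z;
  grp_mul1l : forall x, mul one x = x;
  grp_mul1r : forall x, mul x one = x;
  grp_mulVl : forall x, mul (inv x) x = one;
  grp_mulVr : forall x, mul x (inv x) = one
}.

Section GroupDefs.
Variables (G : Type) (mul : G -> G -> G) (inv : G -> G) (one : G).

Fixpoint gpow (x : G) (n : nat) : G :=
  match n with 0 => one | S n => mul x (gpow x n) end.

Definition gconj (g h : G) : G := mul (mul g h) (inv g).
Definition gcomm (g h : G) : G := mul (mul g h) (mul (inv g) (inv h)).

Inductive derived : nat -> G -> Prop :=
| der0 x : derived 0 x
| der_comm i a b : derived i a -> derived i b -> derived (S i) (gcomm a b)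
| der_one i : derived (S i) one
| der_mul i x y : derived (S i) x -> derived (S i) y -> derived (S i) (mul x y)
| der_inv i x : derived (S i) x -> derived (S i) (inv x).

Definition derived_length (d : nat) : Prop :=
  (forall x, derived d x -> x = one) /\
  (forall k, k < d -> exists x, derived k x /\ x <> one).

Definition exponent (e : nat) : Prop :=
  0 < e /\ (forall x, gpow x e = one) /\
  (forall m, 0 < m -> (forall x, gpow x m = one) -> e <= m).

End GroupDefs.

Definition word (A : Type) := list (bool * A).   (* (true,a) = a, (false,a) = a^-1 *)

Definition winv {A} (w : word A) : word A :=
  rev (map (fun p => (negb (fst p), snd p)) w).

Fixpoint wpow {A} (w : word A) (n : nat) : word A :=
  match n with 0 => [] | S n => w ++ wpow w n end.

(* equality in the group < A | Rel >: the congruence on words generated by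
   free cancellation and the relators *)
Inductive peq {A} (Rel : word A -> Prop) : word A -> word A -> Prop :=
| peq_refl w : peq Rel w w
| peq_sym u v : peq Rel u v -> peq Rel v u
| peq_trans u v w : peq Rel u v -> peq Rel v w -> peq Rel u w
| peq_cancel u v b a : peq Rel (u ++ (b, a) :: (negb b, a) :: v) (u ++ v)
| peq_rel u v r : Rel r -> peq Rel (u ++ r ++ v) (u ++ v).

Inductive in_gen {A} (Rel : word A -> Prop) (S : word A -> Prop) : word A -> Prop :=
| gen_base w : S w -> in_gen Rel S w
| gen_nil : in_gen Rel S []
| gen_app u v : in_gen Rel S u -> in_gen Rel S v -> in_gen Rel S (u ++ v)
| gen_inv u : in_gen Rel S u -> in_gen Rel S (winv u)
| gen_peq u v : peq Rel u v -> in_gen Rel S u -> in_gen Rel S v.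

Definition no_rel {A} : word A -> Prop := fun _ => False.

Definition wcomm {A} (u v : word A) : word A := u ++ v ++ winv u ++ winv v.

Section Tensor.
Variables (G : Type) (mul : G -> G -> G) (inv : G -> G) (one : G).

(* defining relators of the nonabelian tensor square G (x) G, letter (g,h) = g (x) h:
   gg' (x) h = (^g g' (x) ^g h)(g (x) h),   g (x) hh' = (g (x) h)(^h g (x) ^h h') *)
Definition tensor_rel (r : word (G * G)) : Prop :=
  (exists g g' h, r = [(true, (mul g g', h)); (false, (g, h));
                       (false, (gconj G mul inv g g', gconj G mul inv g h))]) \/
  (exists g h h', r = [(true, (g, mul h h'));
                       (false, (gconj G mul inv h g, gconj G mul inv h h'));
                       (false, (g, h))]).

Definition tensor_exp_dvd (N : nat) : Prop :=
  forall w : word (G * G), peq tensor_rel (wpow w N) [].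

(* evaluation F -> G of the free group F on the set G *)
Fixpoint eval (w : word G) : G :=
  match w with
  | [] => one
  | (b, a) :: w => mul (if b then a else inv a) (eval w)
  end.

(* Hopf formula M(G) = (R /\ [F,F]) / [F,R], with F free on G, R = ker eval *)
Definition in_FF (w : word G) : Prop :=
  in_gen no_rel (fun c => exists u v, c = wcomm u v) w.
Definition in_FR (w : word G) : Prop :=
  in_gen no_rel (fun c => exists u r, eval r = one /\ c = wcomm u r) w.

Definition schur_exp_dvd (N : nat) : Prop :=
  forall w : word G, in_FF w -> eval w = one -> in_FR (wpow w N).

End Tensor.

(* Let T = G ⊗ G and let [level i] be the subgroup of T generated by the
   g ⊗ h with g or h in G^(i), so that [level 0] = T and [level d] = 1.
   Modulo [level (i+1)], conjugation by x ⊗ y is the action of [x, y], the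
   symbols with both entries in G^(i) are central of order dividing e, and
   [x ⊗ y, x' ⊗ y'] = [x, y] ⊗ [x', y'], which is even trivial when i = 0.
   Moreover (n ⊗ g)^e = (n ⊗ [n, g])^(-e(e-1)/2) for n in G^(i), which is
   trivial when e is odd and of order dividing 2 otherwise.  The class-two
   formula (xy)^k = x^k y^k [y, x]^(k(k-1)/2) spreads these bounds from the
   generators to all of [level i]: its e-th powers (2e-th powers if i > 0 and
   e is even) lie in [level (i+1)], which gives the bounds on exp(G ⊗ G).
   Finally g ⊗ h ↦ [g, h] induces a homomorphism from G ⊗ G onto
   [F, F] / [F, R], which contains M(G) = (R ∩ [F, F]) / [F, R] by Hopf's
   formula, so exp M(G) divides exp(G ⊗ G). *)

From Stdlib Require Import Arith PeanoNat.
From Stdlib Require Import Setoid Morphisms Lia List.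
Import ListNotations.

Fixpoint binom2 (n : nat) : nat :=
  match n with 0 => 0 | S k => k + binom2 k end.

Lemma double_binom2 n : 2 * binom2 n = n * (n - 1).
Proof. induction n as [|n IHn]; simpl binom2; [reflexivity|]. destruct n; simpl in *; nia. Qed.

Lemma dvd_binom2_odd n : Nat.Odd n -> Nat.divide n (binom2 n).
Proof. intros [q ->]. exists q. pose proof (double_binom2 (2 * q + 1)). nia. Qed.
Lemma dvd_double_binom2 n : Nat.divide n (2 * binom2 n).
Proof. exists (n - 1). rewrite double_binom2. ring. Qed.
Lemma dvd_binom2_double n : Nat.divide n (binom2 (2 * n)).
Proof. exists (2 * n - 1). pose proof (double_binom2 (2 * n)). nia. Qed.

(** * Groups up to an equivalence relation *)

(* Presented groups and their quotients are words modulo a congruence, hence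
   groups only up to an equivalence relation. *)
Record sgroup : Type := SGroup {
  sg_car :> Type;
  sg_eq : relation sg_car;
  mulg : sg_car -> sg_car -> sg_car;
  invg : sg_car -> sg_car;
  oneg : sg_car;
  sg_eq_equiv : Equivalence sg_eq;
  mulg_proper : Proper (sg_eq ==> sg_eq ==> sg_eq) mulg;
  invg_proper : Proper (sg_eq ==> sg_eq) invg;
  mulgA : forall x y z, sg_eq (mulg x (mulg y z)) (mulg (mulg x y) z);
  mul1g : forall x, sg_eq (mulg oneg x) x;
  mulg1 : forall x, sg_eq (mulg x oneg) x;
  mulVg : forall x, sg_eq (mulg (invg x) x) oneg;
  mulgV : forall x, sg_eq (mulg x (invg x)) oneg }.

Arguments sg_eq {s}. Arguments mulg {s}. Arguments invg {s}. Arguments oneg {s}.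
Arguments mulgA {s}. Arguments mul1g {s}. Arguments mulg1 {s}.
Arguments mulVg {s}. Arguments mulgV {s}.
#[global] Existing Instances sg_eq_equiv mulg_proper invg_proper.

Infix "≈" := sg_eq (at level 70).
Infix "⋅" := mulg (at level 40, left associativity).

Fixpoint expg {H : sgroup} (x : H) (n : nat) : H :=
  match n with 0 => oneg | S n => x ⋅ expg x n end.
Notation "x ^+ n" := (expg x n) (at level 29, left associativity).

Definition commg {H : sgroup} (x y : H) : H := x ⋅ y ⋅ invg x ⋅ invg y.

Definition central {H : sgroup} (c : H) : Prop := forall t, c ⋅ t ≈ t ⋅ c.

Definition central_tors {H : sgroup} (m : nat) (c : H) : Prop :=
  central c /\ c ^+ m ≈ oneg.

Inductive span {H : sgroup} (P : H -> Prop) : H -> Prop :=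
| span_base x : P x -> span P x
| span_one : span P oneg
| span_mul x y : span P x -> span P y -> span P (x ⋅ y)
| span_inv x : span P x -> span P (invg x)
| span_eq x y : x ≈ y -> span P x -> span P y.

Section SetoidGroupLaws.
Context {H : sgroup}.
Implicit Types x y z : H.

Lemma mulKg x y : invg x ⋅ (x ⋅ y) ≈ y.
Proof. rewrite mulgA, mulVg, mul1g; reflexivity. Qed.
Lemma mulKVg x y : x ⋅ (invg x ⋅ y) ≈ y.
Proof. rewrite mulgA, mulgV, mul1g; reflexivity. Qed.
Lemma mulgI x y z : x ⋅ y ≈ x ⋅ z -> y ≈ z.
Proof. intro E. rewrite <- (mulKg x y), E, mulKg; reflexivity. Qed.
Lemma mulIg x y z : y ⋅ x ≈ z ⋅ x -> y ≈ z.
Proof.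
  intro E. rewrite <- (mulg1 y), <- (mulgV x), mulgA, E, <- mulgA, mulgV, mulg1.
  reflexivity.
Qed.
Lemma invg_unique x y : x ⋅ y ≈ oneg -> y ≈ invg x.
Proof. intro E. apply (mulgI x). rewrite E, mulgV; reflexivity. Qed.
Lemma invgK x : invg (invg x) ≈ x.
Proof. symmetry; apply invg_unique, mulVg. Qed.
Lemma invMg x y : invg (x ⋅ y) ≈ invg y ⋅ invg x.
Proof.
  symmetry; apply invg_unique.
  rewrite <- mulgA, (mulgA y), mulgV, mul1g, mulgV; reflexivity.
Qed.
Lemma invg1 : invg (@oneg H) ≈ oneg.
Proof. symmetry; apply invg_unique, mul1g. Qed.
Lemma eq_invg_mul x y : x ⋅ y ≈ oneg -> x ≈ invg y.
Proof. intro E. apply (mulIg y). rewrite E, mulVg; reflexivity. Qed.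
Lemma idem_oneg x : x ⋅ x ≈ x -> x ≈ oneg.
Proof. intro E. apply (mulgI x). rewrite mulg1; exact E. Qed.

End SetoidGroupLaws.

Ltac sg_simpl := repeat (rewrite <- mulgA || rewrite mulKg || rewrite mulKVg
  || rewrite mulVg || rewrite mulgV || rewrite mul1g || rewrite mulg1
  || rewrite invMg || rewrite invgK || rewrite invg1).

Section SetoidGroupTheory.
Context {H : sgroup}.
Implicit Types x y z t c : H.

#[global] Instance expg_proper : Proper (sg_eq ==> eq ==> sg_eq) (@expg H).
Proof. intros x y E n _ <-. induction n; simpl; [reflexivity | apply mulg_proper; auto]. Qed.

Lemma expgSr x n : x ^+ S n ≈ x ^+ n ⋅ x.
Proof.
  induction n; simpl; [rewrite mulg1, mul1g; reflexivity|].
  simpl in IHn. rewrite IHn at 1. apply mulgA.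
Qed.
Lemma expgD x a b : x ^+ (a + b) ≈ x ^+ a ⋅ x ^+ b.
Proof. induction a; simpl; [rewrite mul1g | rewrite IHa, mulgA]; reflexivity. Qed.
Lemma expgM x a b : x ^+ (a * b) ≈ (x ^+ a) ^+ b.
Proof.
  induction b; simpl; [rewrite Nat.mul_0_r; reflexivity|].
  rewrite Nat.mul_succ_r, expgD, IHb, <- expgSr. reflexivity.
Qed.
Lemma expg1 x : x ^+ 1 ≈ x.
Proof. apply mulg1. Qed.
Lemma expg1n n : (@oneg H) ^+ n ≈ oneg.
Proof. induction n; simpl; [| rewrite IHn, mul1g]; reflexivity. Qed.
Lemma expgVn x n : (invg x) ^+ n ≈ invg (x ^+ n).
Proof.
  induction n; simpl; [rewrite invg1; reflexivity|].
  rewrite IHn, <- invMg, <- expgSr. reflexivity.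
Qed.
Lemma expg_dvd_one x m n : x ^+ m ≈ oneg -> Nat.divide m n -> x ^+ n ≈ oneg.
Proof. intros E [k ->]. rewrite Nat.mul_comm, expgM, E, expg1n; reflexivity. Qed.

#[global] Instance central_proper : Proper (sg_eq ==> iff) (@central H).
Proof. intros c d E; split; intros C t; [rewrite <- E | rewrite E]; apply C. Qed.

Lemma central1 : central (@oneg H).
Proof. intro t; rewrite mul1g, mulg1; reflexivity. Qed.
Lemma centralM c d : central c -> central d -> central (c ⋅ d).
Proof. intros C D t. rewrite <- mulgA, D, mulgA, C, mulgA; reflexivity. Qed.
Lemma centralV c : central c -> central (invg c).
Proof.
  intros C t. apply (mulgI c). rewrite mulKVg, mulgA, C, <- mulgA, mulgV, mulg1.
  reflexivity.
Qed.
Lemma centralX c n : central c -> central (c ^+ n).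
Proof. intro C; induction n; simpl; [apply central1 | apply centralM; auto]. Qed.

Lemma expgMn x y n : x ⋅ y ≈ y ⋅ x -> (x ⋅ y) ^+ n ≈ x ^+ n ⋅ y ^+ n.
Proof.
  intro C.
  assert (Cn : forall k, x ^+ k ⋅ y ≈ y ⋅ x ^+ k).
  { induction k; simpl; [rewrite mul1g, mulg1; reflexivity|].
    rewrite <- mulgA, IHk, mulgA, C, <- mulgA; reflexivity. }
  induction n; simpl; [rewrite mul1g; reflexivity|].
  rewrite IHn. sg_simpl. apply mulg_proper; [reflexivity|].
  rewrite !mulgA, Cn; reflexivity.
Qed.

#[global] Instance commg_proper : Proper (sg_eq ==> sg_eq ==> sg_eq) (@commg H).
Proof. intros a b E c d F; unfold commg; rewrite E, F; reflexivity. Qed.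

Lemma commgC x y : x ⋅ y ≈ commg x y ⋅ (y ⋅ x).
Proof. unfold commg. sg_simpl. reflexivity. Qed.
Lemma invg_comm x y : commg x y ≈ invg (commg y x).
Proof. unfold commg. sg_simpl. reflexivity. Qed.
Lemma comm1g z : commg oneg z ≈ oneg.
Proof. unfold commg. sg_simpl. reflexivity. Qed.

Lemma commMg x y z : central (commg y z) -> commg (x ⋅ y) z ≈ commg y z ⋅ commg x z.
Proof.
  intro C.
  assert (E : y ⋅ (z ⋅ invg y) ≈ commg y z ⋅ z) by (unfold commg; sg_simpl; reflexivity).
  transitivity (x ⋅ (y ⋅ (z ⋅ invg y)) ⋅ (invg x ⋅ invg z));
    [unfold commg; sg_simpl; reflexivity|].
  rewrite E, (mulgA x), <- (C x). unfold commg. sg_simpl. reflexivity.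
Qed.
Lemma commVg x z : central (commg x z) -> commg (invg x) z ≈ invg (commg x z).
Proof.
  intro C.
  assert (E : commg x z ≈ invg x ⋅ (commg x z ⋅ x)) by (rewrite (C x), mulKg; reflexivity).
  rewrite E. unfold commg. sg_simpl. reflexivity.
Qed.

Lemma commg_mul_central_l x y r : central r -> commg (x ⋅ r) y ≈ commg x y.
Proof.
  intro C. unfold commg. rewrite invMg, <- !mulgA. apply mulg_proper; [reflexivity|].
  rewrite (mulgA r y), (C y). sg_simpl. reflexivity.
Qed.
Lemma commg_mul_central_r x y r : central r -> commg x (y ⋅ r) ≈ commg x y.
Proof.
  intro C. unfold commg. rewrite invMg, <- !mulgA. do 2 (apply mulg_proper; [reflexivity|]).
  rewrite (centralV r C (invg y)), (C (invg x ⋅ (invg y ⋅ invg r))). sg_simpl. reflexivity.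
Qed.

#[global] Instance central_tors_proper m : Proper (sg_eq ==> iff) (@central_tors H m).
Proof. intros c d E. unfold central_tors. rewrite E. reflexivity. Qed.

Lemma central_tors1 m : central_tors m (@oneg H).
Proof. split; [apply central1 | apply expg1n]. Qed.
Lemma central_torsM m c d : central_tors m c -> central_tors m d -> central_tors m (c ⋅ d).
Proof.
  intros [C Cm] [D Dm]; split; [apply centralM; auto|].
  rewrite expgMn, Cm, Dm, mul1g by apply C. reflexivity.
Qed.
Lemma central_torsV m c : central_tors m c -> central_tors m (invg c).
Proof. intros [C Cm]; split; [apply centralV; auto | rewrite expgVn, Cm, invg1; reflexivity]. Qed.

#[global] Instance span_proper (P : H -> Prop) : Proper (sg_eq ==> iff) (span P).
Proof. intros x y E; split; apply span_eq; [exact E | symmetry; exact E]. Qed.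

Lemma central_tors_comm_span_l (P A : H -> Prop) m :
  (forall s a, P s -> A a -> central_tors m (commg s a)) ->
  forall k a, span P k -> A a -> central_tors m (commg k a).
Proof.
  intros HP k a Hk Ha. induction Hk as [| |x y _ IHx _ IHy|x _ IHx|x y E _ IHx].
  - auto.
  - rewrite comm1g. apply central_tors1.
  - rewrite commMg by apply IHy. apply central_torsM; auto.
  - rewrite commVg by apply IHx. apply central_torsV; auto.
  - rewrite <- E; exact IHx.
Qed.

Lemma central_tors_comm_span (P : H -> Prop) m :
  (forall s s', P s -> P s' -> central_tors m (commg s s')) ->
  forall k k', span P k -> span P k' -> central_tors m (commg k k').
Proof.
  intros HP k k' Hk Hk'.
  apply (central_tors_comm_span_l P (span P)); auto. intros s a Hs Ha.
  rewrite invg_comm. apply central_torsV.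
  apply (central_tors_comm_span_l P P); auto.
Qed.

Lemma expgMn_class2 x y n : central (commg y x) ->
  (x ⋅ y) ^+ n ≈ x ^+ n ⋅ y ^+ n ⋅ (commg y x) ^+ (binom2 n).
Proof.
  intro C. set (c := commg y x) in *.
  assert (Hyx : forall k, y ⋅ x ^+ k ≈ c ^+ k ⋅ x ^+ k ⋅ y).
  { induction k; simpl; [sg_simpl; reflexivity|].
    transitivity (c ⋅ (x ⋅ (y ⋅ x ^+ k))).
    { rewrite (mulgA y x), (commgC y x). sg_simpl. reflexivity. }
    rewrite IHk. sg_simpl. apply mulg_proper; [reflexivity|].
    rewrite mulgA, <- (centralX c k C x). sg_simpl. reflexivity. }
  induction n; simpl; [rewrite !mul1g; reflexivity|].
  rewrite IHn, Nat.add_comm, expgD. sg_simpl. apply mulg_proper; [reflexivity|].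
  rewrite mulgA, Hyx. sg_simpl. rewrite (centralX c n C). sg_simpl. reflexivity.
Qed.

Lemma span_exp_class2 (P : H -> Prop) b m :
  (forall s s', P s -> P s' -> central_tors m (commg s s')) ->
  (forall s, P s -> s ^+ b ≈ oneg) -> Nat.divide m (binom2 b) ->
  forall t, span P t -> t ^+ b ≈ oneg.
Proof.
  intros HQ HS Hd t Ht.
  induction Ht as [| |x y Hx IHx Hy IHy|x _ IHx|x y E _ IHx].
  - auto.
  - apply expg1n.
  - destruct (central_tors_comm_span P m HQ y x Hy Hx) as [C Cm].
    rewrite expgMn_class2 by exact C.
    rewrite IHx, IHy, (expg_dvd_one _ _ _ Cm Hd), !mul1g; reflexivity.
  - rewrite expgVn, IHx, invg1; reflexivity.
  - rewrite <- E; exact IHx.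
Qed.

End SetoidGroupTheory.

(** * Quotients and presented groups *)

Record normal_subgroup {H : sgroup} (L : H -> Prop) : Prop := {
  nsg_proper : Proper (sg_eq ==> iff) L;
  nsg_one : L oneg;
  nsg_mul : forall x y, L x -> L y -> L (x ⋅ y);
  nsg_inv : forall x, L x -> L (invg x);
  nsg_conj : forall a x, L x -> L (a ⋅ x ⋅ invg a) }.

Section Quotient.
Context {H : sgroup} (L : H -> Prop) (HL : normal_subgroup L).

Local Instance L_proper : Proper (sg_eq ==> iff) L := nsg_proper _ HL.

Lemma normal_subgroup_of_eq (x y : H) : x ≈ y -> L (x ⋅ invg y).
Proof. intro E. rewrite E, mulgV. apply (nsg_one _ HL). Qed.

Definition quot : sgroup.
Proof.
  refine (SGroup H (fun x y => L (x ⋅ invg y)) mulg invg oneg _ _ _ _ _ _ _ _).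
  - split.
    + intro x; apply normal_subgroup_of_eq; reflexivity.
    + intros x y E. generalize (nsg_inv _ HL _ E). sg_simpl. auto.
    + intros x y z E F. generalize (nsg_mul _ HL _ _ E F). sg_simpl. auto.
  - intros x x' E y y' F.
    generalize (nsg_mul _ HL _ _ (nsg_conj _ HL x _ F) E). sg_simpl. auto.
  - intros x x' E.
    generalize (nsg_conj _ HL (invg x) _ (nsg_inv _ HL _ E)). sg_simpl. auto.
  - intros; apply normal_subgroup_of_eq, mulgA.
  - intros; apply normal_subgroup_of_eq, mul1g.
  - intros; apply normal_subgroup_of_eq, mulg1.
  - intros; apply normal_subgroup_of_eq, mulVg.
  - intros; apply normal_subgroup_of_eq, mulgV.
Defined.

Lemma quot_eq_of (x y : H) : x ≈ y -> @sg_eq quot x y.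
Proof. exact (normal_subgroup_of_eq x y). Qed.

Lemma quot_eq1 (x : H) : @sg_eq quot x oneg <-> L x.
Proof. simpl. rewrite invg1, mulg1. reflexivity. Qed.

Lemma expg_quot (x : H) n : @expg quot x n = @expg H x n.
Proof. induction n; simpl; congruence. Qed.

Lemma span_quot (P : H -> Prop) (x : H) : span P x -> @span quot P x.
Proof.
  induction 1.
  - apply span_base; auto.
  - apply (@span_one quot).
  - apply (@span_mul quot); auto.
  - apply (@span_inv quot); auto.
  - apply (@span_eq quot) with x; [apply quot_eq_of|]; auto.
Qed.

End Quotient.

Fixpoint weval {A : Type} {K : sgroup} (f : A -> K) (w : word A) : K :=
  match w with
  | [] => oneg
  | (b, a) :: w => (if b then f a else invg (f a)) ⋅ weval f w
  end.

Section PresentedGroup.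
Context {A : Type} (Rel : word A -> Prop).

Lemma peq_app_l x u v : peq Rel u v -> peq Rel (x ++ u) (x ++ v).
Proof.
  induction 1.
  - apply peq_refl.
  - apply peq_sym; auto.
  - eapply peq_trans; eauto.
  - rewrite !app_assoc. apply peq_cancel.
  - rewrite app_assoc, (app_assoc x u). apply peq_rel; auto.
Qed.
Lemma peq_app_r y u v : peq Rel u v -> peq Rel (u ++ y) (v ++ y).
Proof.
  induction 1.
  - apply peq_refl.
  - apply peq_sym; auto.
  - eapply peq_trans; eauto.
  - rewrite <- !app_assoc. apply peq_cancel.
  - rewrite <- !app_assoc. apply peq_rel; auto.
Qed.
Lemma peq_app u u' v v' : peq Rel u u' -> peq Rel v v' -> peq Rel (u ++ v) (u' ++ v').
Proof. intros; eapply peq_trans; [apply peq_app_r | apply peq_app_l]; eauto. Qed.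

Lemma winv_app (u v : word A) : winv (u ++ v) = winv v ++ winv u.
Proof. unfold winv. rewrite map_app, rev_app_distr. reflexivity. Qed.
Lemma winv_cons b a (u : word A) : winv ((b, a) :: u) = winv u ++ [(negb b, a)].
Proof. reflexivity. Qed.
Lemma winvK (u : word A) : winv (winv u) = u.
Proof.
  induction u as [|[b a] u IH]; [reflexivity|].
  rewrite winv_cons, winv_app, IH. simpl. rewrite Bool.negb_involutive. reflexivity.
Qed.

Lemma peq_mulwV (u : word A) : peq Rel (u ++ winv u) [].
Proof.
  induction u as [|[b a] u IH]; simpl; [apply peq_refl|].
  rewrite winv_cons, app_assoc.
  eapply peq_trans; [apply (peq_app_l [(b, a)]), (peq_app_r [(negb b, a)]), IH|].
  apply (peq_cancel Rel [] [] b a).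
Qed.
Lemma peq_mulVw (u : word A) : peq Rel (winv u ++ u) [].
Proof. rewrite <- (winvK u) at 2. apply peq_mulwV. Qed.

Definition presented : sgroup.
Proof.
  refine (SGroup (word A) (peq Rel) (@app _) winv [] _ _ _ _ _ _ peq_mulVw peq_mulwV).
  - split; [exact (peq_refl Rel) | exact (peq_sym Rel) | exact (peq_trans Rel)].
  - intros u u' E v v' F; apply peq_app; auto.
  - intros x x' E.
    apply peq_trans with (winv x ++ (x' ++ winv x')).
    + rewrite <- (app_nil_r (winv x)) at 1. apply peq_app_l, peq_sym, peq_mulwV.
    + rewrite app_assoc. apply peq_trans with ([] ++ winv x'); [|apply peq_refl].
      apply peq_app_r. eapply peq_trans; [|apply peq_mulVw]. apply peq_app_l, peq_sym, E.
  - intros; rewrite app_assoc; apply peq_refl.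
  - intros; apply peq_refl.
  - intros; rewrite app_nil_r; apply peq_refl.
Defined.

Lemma wpow_expg (w : word A) n : wpow w n = @expg presented w n.
Proof. induction n; simpl; congruence. Qed.

Section Evaluation.
Context {K : sgroup} (f : A -> K).

Lemma weval_app u v : weval f (u ++ v) ≈ weval f u ⋅ weval f v.
Proof.
  induction u as [|[b a] u IH]; simpl; [rewrite mul1g; reflexivity|].
  rewrite IH, mulgA. reflexivity.
Qed.

Lemma weval_winv u : weval f (winv u) ≈ invg (weval f u).
Proof.
  induction u as [|[b a] u IH]; simpl; [rewrite invg1; reflexivity|].
  rewrite winv_cons, weval_app, IH, invMg. simpl.
  destruct b; simpl; rewrite ?invgK, mulg1; reflexivity.
Qed.

Lemma weval_peq : (forall r, Rel r -> weval f r ≈ oneg) ->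
  forall u v, peq Rel u v -> weval f u ≈ weval f v.
Proof.
  intros Hrel u v. induction 1 as [| |u v w _ IHuv _ IHvw|u v b a|u v r Hr].
  - reflexivity.
  - symmetry; auto.
  - rewrite IHuv; exact IHvw.
  - rewrite !weval_app. simpl.
    destruct b; simpl; rewrite ?invgK; sg_simpl; reflexivity.
  - rewrite !weval_app, (Hrel r Hr), mul1g. reflexivity.
Qed.

Lemma weval_wpow w n : weval f (wpow w n) ≈ (weval f w) ^+ n.
Proof. induction n as [|n IHn]; simpl; [reflexivity | rewrite weval_app, IHn; reflexivity]. Qed.

End Evaluation.

End PresentedGroup.

(** * Conjugation and the derived series *)

Section GroupLaws.
Context {G : Type} {mul : G -> G -> G} {inv : G -> G} {one : G}.
Hypothesis HG : is_group G mul inv one.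

Lemma grp_mulKg x y : mul (inv x) (mul x y) = y.
Proof. rewrite (grp_assoc _ _ _ _ HG), (grp_mulVl _ _ _ _ HG), (grp_mul1l _ _ _ _ HG); auto. Qed.
Lemma grp_mulKVg x y : mul x (mul (inv x) y) = y.
Proof. rewrite (grp_assoc _ _ _ _ HG), (grp_mulVr _ _ _ _ HG), (grp_mul1l _ _ _ _ HG); auto. Qed.
Lemma grp_inv_unique x y : mul x y = one -> y = inv x.
Proof. intro E. rewrite <- (grp_mulKg x y), E, (grp_mul1r _ _ _ _ HG); auto. Qed.
Lemma grp_invK x : inv (inv x) = x.
Proof. symmetry; apply grp_inv_unique, (grp_mulVl _ _ _ _ HG). Qed.
Lemma grp_invM x y : inv (mul x y) = mul (inv y) (inv x).
Proof.
  symmetry; apply grp_inv_unique.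
  rewrite <- (grp_assoc _ _ _ _ HG), grp_mulKVg, (grp_mulVr _ _ _ _ HG); auto.
Qed.
Lemma grp_inv1 : inv one = one.
Proof. symmetry; apply grp_inv_unique, (grp_mul1l _ _ _ _ HG). Qed.

End GroupLaws.

Ltac grp_simpl HG := unfold gconj, gcomm in *;
  repeat (rewrite <- (grp_assoc _ _ _ _ HG) || rewrite (grp_mulKg HG)
  || rewrite (grp_mulKVg HG) || rewrite (grp_mulVl _ _ _ _ HG)
  || rewrite (grp_mulVr _ _ _ _ HG) || rewrite (grp_mul1l _ _ _ _ HG)
  || rewrite (grp_mul1r _ _ _ _ HG) || rewrite (grp_invM HG)
  || rewrite (grp_invK HG) || rewrite (grp_inv1 HG)).

Section DerivedSeries.
Variables (G : Type) (mul : G -> G -> G) (inv : G -> G) (one : G).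
Hypothesis HG : is_group G mul inv one.

Notation der := (derived G mul inv one).
Notation cj := (gconj G mul inv).
Notation cm := (gcomm G mul inv).
Notation gp := (gpow G mul one).

Lemma gconj1g x : cj one x = x.
Proof. grp_simpl HG; reflexivity. Qed.
Lemma gconjM a b x : cj (mul a b) x = cj a (cj b x).
Proof. grp_simpl HG; reflexivity. Qed.
Lemma gconj_mul a x y : cj a (mul x y) = mul (cj a x) (cj a y).
Proof. grp_simpl HG; reflexivity. Qed.
Lemma gconj_conj a x y : cj a (cj x y) = cj (cj a x) (cj a y).
Proof. grp_simpl HG; reflexivity. Qed.

Lemma derived_one i : der i one.
Proof. destruct i; constructor. Qed.
Lemma derived_mul i x y : der i x -> der i y -> der i (mul x y).
Proof. destruct i; intros; constructor; auto. Qed.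
Lemma derived_inv i x : der i x -> der i (inv x).
Proof. destruct i; intros; constructor; auto. Qed.
Lemma derived_gpow i x k : der i x -> der i (gp x k).
Proof. intro D; induction k; simpl; [apply derived_one | apply derived_mul; auto]. Qed.

Lemma derived_conj i a x : der i x -> der i (cj a x).
Proof.
  induction 1 as [x|i x y _ IHx _ IHy|i|i x y _ IHx _ IHy|i x _ IHx].
  - constructor.
  - replace (cj a (cm x y)) with (cm (cj a x) (cj a y)) by (grp_simpl HG; reflexivity).
    constructor; auto.
  - replace (cj a one) with one by (grp_simpl HG; reflexivity). constructor.
  - replace (cj a (mul x y)) with (mul (cj a x) (cj a y)) by (grp_simpl HG; reflexivity).
    constructor; auto.
  - replace (cj a (inv x)) with (inv (cj a x)) by (grp_simpl HG; reflexivity).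
    constructor; auto.
Qed.

Lemma derived_comm_l i x y : der i x -> der i (cm x y).
Proof.
  intro D. replace (cm x y) with (mul x (cj y (inv x))) by (grp_simpl HG; reflexivity).
  apply derived_mul, derived_conj, derived_inv; auto.
Qed.
Lemma derived_comm_r i x y : der i y -> der i (cm x y).
Proof.
  intro D. replace (cm x y) with (mul (cj x y) (inv y)) by (grp_simpl HG; reflexivity).
  apply derived_mul; [apply derived_conj | apply derived_inv]; auto.
Qed.
Lemma derived_comm_lr i x y : der i x \/ der i y -> der i (cm x y).
Proof. intros [D|D]; [apply derived_comm_l | apply derived_comm_r]; auto. Qed.

Lemma derived1_comm x y : der 1 (cm x y).
Proof. constructor; constructor. Qed.

End DerivedSeries.

(** * Crossed pairings *)

Section CrossedPairing.
Variables (G : Type) (mul : G -> G -> G) (inv : G -> G) (one : G).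
Hypothesis HG : is_group G mul inv one.

Notation der := (derived G mul inv one).
Notation cj := (gconj G mul inv).
Notation cm := (gcomm G mul inv).
Notation gp := (gpow G mul one).

(* What the argument needs of G ⊗ G; it is stated abstractly so that it also
   applies to the quotients [tensor_square / level (S i)]. *)
Record tensor_model := TensorModel {
  tm_grp :> sgroup;
  tens : G -> G -> tm_grp;
  tact : G -> tm_grp -> tm_grp;
  tact_proper : forall a, Proper (sg_eq ==> sg_eq) (tact a);
  tactM : forall a x y, tact a (x ⋅ y) ≈ tact a x ⋅ tact a y;
  tactV : forall a x, tact a (invg x) ≈ invg (tact a x);
  tact_tens : forall a x y, tact a (tens x y) ≈ tens (cj a x) (cj a y);
  tact_mul : forall a b t, tact (mul a b) t ≈ tact a (tact b t);
  tact_one : forall t, tact one t ≈ t;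
  tens_mul_l : forall g g' h, tens (mul g g') h ≈ tens (cj g g') (cj g h) ⋅ tens g h;
  tens_mul_r : forall g h h', tens g (mul h h') ≈ tens g h ⋅ tens (cj h g) (cj h h');
  tens_ind : forall P : tm_grp -> Prop, Proper (sg_eq ==> iff) P -> P oneg ->
    (forall a b, P (tens a b)) -> (forall x y, P x -> P y -> P (x ⋅ y)) ->
    (forall x, P x -> P (invg x)) -> forall t, P t }.

Definition tens_gen {K : Type} (tens : G -> G -> K) (i : nat) (t : K) : Prop :=
  exists x y, t = tens x y /\ (der i x \/ der i y).

Section ModelTheory.
Variable M : tensor_model.
Existing Instance tact_proper.
Notation tens := (tens M).
Notation tact := (tact M).

Lemma tens1g h : tens one h ≈ oneg.
Proof.
  apply idem_oneg. symmetry.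
  rewrite <- (grp_mul1l _ _ _ _ HG one) at 1.
  rewrite tens_mul_l, !(gconj1g _ _ _ _ HG). reflexivity.
Qed.
Lemma tensg1 g : tens g one ≈ oneg.
Proof.
  apply idem_oneg. symmetry.
  rewrite <- (grp_mul1l _ _ _ _ HG one) at 1.
  rewrite tens_mul_r, !(gconj1g _ _ _ _ HG). reflexivity.
Qed.

Lemma tact1 a : tact a oneg ≈ oneg.
Proof. apply idem_oneg. rewrite <- tactM, mul1g. reflexivity. Qed.

(* Expand (m m') ⊗ (n n') in two ways, for the m', n' that turn one of the
   resulting symbols into x ⊗ y. *)
Lemma conj_tens_tens m n x y :
  tens m n ⋅ tens x y ⋅ invg (tens m n) ≈ tens (cj (cm m n) x) (cj (cm m n) y).
Proof.
  set (m' := cj (inv (mul n m)) x). set (n' := cj (inv (mul n m)) y).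
  set (A := tens (cj m m') (cj m n)).
  set (B := tens (cj (cj m n) (cj m m')) (cj (cj m n) (cj m n'))).
  set (C := tens m n). set (D := tens (cj n m) (cj n n')).
  set (E := tens (cj (cj n m) (cj n m')) (cj (cj n m) (cj n n'))).
  assert (via_l : tens (mul m m') (mul n n') ≈ A ⋅ B ⋅ (C ⋅ D)).
  { rewrite tens_mul_l.
    replace (cj m (mul n n')) with (mul (cj m n) (cj m n')) by (grp_simpl HG; reflexivity).
    rewrite !tens_mul_r. reflexivity. }
  assert (via_r : tens (mul m m') (mul n n') ≈ A ⋅ C ⋅ (E ⋅ D)).
  { rewrite tens_mul_r, tens_mul_l.
    replace (cj n (mul m m')) with (mul (cj n m) (cj n m')) by (grp_simpl HG; reflexivity).
    rewrite tens_mul_l. reflexivity. }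
  assert (swap : B ⋅ C ≈ C ⋅ E).
  { apply (mulgI A), (mulIg D).
    transitivity (A ⋅ B ⋅ (C ⋅ D)); [sg_simpl; reflexivity|].
    rewrite <- via_l, via_r. sg_simpl. reflexivity. }
  assert (E_xy : E = tens x y) by (unfold E, m', n'; f_equal; grp_simpl HG; reflexivity).
  assert (B_conj : B = tens (cj (cm m n) x) (cj (cm m n) y))
    by (unfold B, m', n'; f_equal; grp_simpl HG; reflexivity).
  rewrite <- E_xy, <- B_conj, <- swap. sg_simpl. reflexivity.
Qed.

Lemma conj_tens m n t : tens m n ⋅ t ⋅ invg (tens m n) ≈ tact (cm m n) t.
Proof.
  revert t. apply tens_ind.
  - intros x y E. rewrite E. reflexivity.
  - rewrite tact1, mulg1, mulgV. reflexivity.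
  - intros a b. rewrite conj_tens_tens, tact_tens. reflexivity.
  - intros x y Px Py. rewrite tactM, <- Px, <- Py. sg_simpl. reflexivity.
  - intros x Px. rewrite tactV, <- Px. sg_simpl. reflexivity.
Qed.

Lemma conjV_tens m n t : invg (tens m n) ⋅ t ⋅ tens m n ≈ tact (inv (cm m n)) t.
Proof.
  rewrite <- (tact_one M (invg (tens m n) ⋅ t ⋅ tens m n)).
  rewrite <- (grp_mulVl _ _ _ _ HG (cm m n)), tact_mul, <- conj_tens.
  sg_simpl. reflexivity.
Qed.

Lemma tact_tens_expand a x y :
  tact a (tens x y) ≈ tens a (cj x y) ⋅ tens x y ⋅ invg (tens a y).
Proof.
  assert (via_action : tens (mul a x) y ≈ tact a (tens x y) ⋅ tens a y)
    by (rewrite tens_mul_l, tact_tens; reflexivity).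
  assert (via_conj : tens (mul a x) y ≈ tens a (cj x y) ⋅ tens x y).
  { replace (mul a x) with (mul x (cj (inv x) a)) by (grp_simpl HG; reflexivity).
    rewrite tens_mul_l. replace (cj x (cj (inv x) a)) with a by (grp_simpl HG; reflexivity).
    reflexivity. }
  rewrite <- via_conj, via_action. sg_simpl. reflexivity.
Qed.

Lemma tact_tens_comm k x y : tact k (tens x y) ≈ tens k (cm x y) ⋅ tens x y.
Proof.
  assert (E : tens k (cj x y) ≈ tens k (cm x y) ⋅ tact (cm x y) (tens k y)).
  { replace (cj x y) with (mul (cm x y) y) by (grp_simpl HG; reflexivity).
    rewrite tens_mul_r, tact_tens. reflexivity. }
  rewrite tact_tens_expand, E, <- conj_tens. sg_simpl. reflexivity.
Qed.

Lemma comm_tens x y x' y' : commg (tens x y) (tens x' y') ≈ tens (cm x y) (cm x' y').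
Proof.
  unfold commg. rewrite conj_tens, tact_tens_comm. sg_simpl. reflexivity.
Qed.

Section Level.
Variable i : nat.
Hypothesis tens_triv : forall x y, der (S i) x \/ der (S i) y -> tens x y ≈ oneg.

Lemma tact_derived a t : der (S i) a -> tact a t ≈ t.
Proof.
  intro Da. revert t. apply tens_ind.
  - intros x y E. rewrite E. reflexivity.
  - apply tact1.
  - intros x y. rewrite tact_tens_expand, (tens_triv a (cj x y)), (tens_triv a y) by auto.
    sg_simpl. reflexivity.
  - intros x y Px Py. rewrite tactM, Px, Py. reflexivity.
  - intros x Px. rewrite tactV, Px. reflexivity.
Qed.

Lemma tens_central c d : der i c -> der i d -> central (tens c d).
Proof.
  intros Dc Dd t. apply (mulIg (invg (tens c d))).
  rewrite conj_tens, tact_derived by (constructor; auto). sg_simpl. reflexivity.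
Qed.

Lemma tens_mul_l_derived a a' d :
  der i a' -> der i d -> tens (mul a a') d ≈ tens a' d ⋅ tens a d.
Proof.
  intros Da Dd.
  rewrite tens_mul_l, <- tact_tens, tact_tens_comm, (tens_triv a (cm a' d))
    by (right; constructor; auto).
  rewrite mul1g. reflexivity.
Qed.

Lemma tens_conj_self n x : der i n -> der i x -> tens n (cj n x) ≈ tens n x.
Proof.
  intros Dn Dx.
  replace (tens n (cj n x)) with (tens (cj n n) (cj n x)) by (f_equal; grp_simpl HG; reflexivity).
  rewrite <- tact_tens, tact_tens_comm, tens_triv by (right; constructor; auto).
  rewrite mul1g; reflexivity.
Qed.

Variable e : nat.
Hypothesis He : forall x, gp x e = one.

Lemma tens_exp a d : der i a -> der i d -> (tens a d) ^+ e ≈ oneg.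
Proof.
  intros Da Dd.
  assert (tens_pow : forall k, tens (gp a k) d ≈ (tens a d) ^+ k).
  { induction k as [|k IHk]; simpl; [apply tens1g|].
    rewrite tens_mul_l_derived, IHk, <- expgSr by (auto; apply derived_gpow; auto).
    reflexivity. }
  rewrite <- tens_pow, He. apply tens1g.
Qed.

Variable m : nat.
(* The symbols a ⊗ b with b in G' include the commutators
   [x ⊗ y, x' ⊗ y'] = [x, y] ⊗ [x', y'] and the terms n ⊗ [n, g] below; they
   have order dividing e, and at level 0 they are already trivial. *)
Hypothesis Hm : forall a b, der i a -> der i b -> der 1 b -> (tens a b) ^+ m ≈ oneg.

Lemma central_tors_comm_gen s s' :
  tens_gen tens i s -> tens_gen tens i s' -> central_tors m (commg s s').
Proof.
  intros [x [y [-> Dxy]]] [x' [y' [-> Dxy']]].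
  rewrite comm_tens. split.
  - apply tens_central; apply derived_comm_lr; auto.
  - apply Hm; [apply derived_comm_lr; auto | apply derived_comm_lr; auto | apply derived1_comm].
Qed.

Variable j : nat.
Hypothesis Hjm : Nat.divide m (j * binom2 e).

(* n^k ⊗ g = (n ⊗ [n, g])^(C(k, 2)) (n ⊗ g)^k, and the left side is trivial for k = e. *)
Lemma tens_exp_l n g : der i n -> (tens n g) ^+ (j * e) ≈ oneg.
Proof.
  intro Dn. set (z := tens n (cm n g)). set (f := tens n g).
  assert (tens_comm_pow : forall k, tens n (cm (gp n k) g) ≈ z ^+ k).
  { induction k as [|k IHk]; simpl.
    - replace (cm one g) with one by (grp_simpl HG; reflexivity). apply tensg1.
    - replace (cm (mul n (gp n k)) g) with (mul (cj n (cm (gp n k) g)) (cm n g))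
        by (grp_simpl HG; reflexivity).
      rewrite tens_mul_r, <- tact_tens, tact_tens_comm, (tens_triv _ (cm n _))
        by (right; constructor; auto; apply derived_comm_l; auto).
      rewrite tens_conj_self, IHk, mul1g by (auto; apply derived_comm_l, derived_gpow; auto).
      symmetry; apply expgSr. }
  assert (tens_pow_l : forall k, z ^+ (binom2 k) ⋅ f ^+ k ≈ tens (gp n k) g).
  { induction k as [|k IHk]; simpl.
    - rewrite mul1g, tens1g. reflexivity.
    - rewrite tens_mul_l, <- tact_tens, tact_tens_comm, tens_comm_pow, <- IHk, expgD.
      rewrite (expgSr f k). sg_simpl. reflexivity. }
  assert (f_exp : f ^+ e ≈ invg (z ^+ binom2 e)).
  { apply invg_unique. rewrite tens_pow_l, He. apply tens1g. }
  rewrite Nat.mul_comm, expgM, f_exp, expgVn, <- expgM, Nat.mul_comm.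
  rewrite (expg_dvd_one z m); [apply invg1 | | exact Hjm].
  apply Hm; auto; [apply derived_comm_l; auto | apply derived1_comm].
Qed.

Lemma tens_exp_r n g : der i n -> (tens g n) ^+ (j * e) ≈ oneg.
Proof.
  intro Dn. set (w := tens n (cm g n)). set (h := tens g n).
  assert (Wc : central w) by (apply tens_central; auto; apply derived_comm_r; auto).
  assert (tens_comm_pow : forall k, tens n (cm g (gp n k)) ≈ w ^+ k).
  { induction k as [|k IHk]; simpl.
    - replace (cm g one) with one by (grp_simpl HG; reflexivity). apply tensg1.
    - replace (cm g (mul n (gp n k))) with (mul (cm g n) (cj n (cm g (gp n k))))
        by (grp_simpl HG; reflexivity).
      rewrite tens_mul_r, <- tact_tens, tact_tens_comm, (tens_triv _ (cm n _))
        by (right; constructor; auto; apply derived_conj, derived_comm_r, derived_gpow; auto).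
      rewrite tens_conj_self, IHk, mul1g by (auto; apply derived_comm_r, derived_gpow; auto).
      reflexivity. }
  assert (tens_pow_r : forall k, tens g (gp n k) ≈ h ^+ k ⋅ w ^+ (binom2 k)).
  { induction k as [|k IHk]; simpl.
    - rewrite mul1g, tensg1. reflexivity.
    - rewrite tens_mul_r, <- tact_tens, tact_tens_comm, tens_comm_pow, IHk, expgD.
      sg_simpl. apply mulg_proper; [reflexivity|].
      rewrite !mulgA. apply mulg_proper; [|reflexivity]. apply (centralX _ k Wc). }
  assert (h_exp : h ^+ e ≈ invg (w ^+ binom2 e)).
  { apply eq_invg_mul. rewrite <- tens_pow_r, He. apply tensg1. }
  rewrite Nat.mul_comm, expgM, h_exp, expgVn, <- expgM, Nat.mul_comm.
  rewrite (expg_dvd_one w m); [apply invg1 | | exact Hjm].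
  apply Hm; auto; [apply derived_comm_r; auto | apply derived1_comm].
Qed.

Hypothesis Hjem : Nat.divide m (binom2 (j * e)).

Lemma span_tens_gen_exp t : span (tens_gen tens i) t -> t ^+ (j * e) ≈ oneg.
Proof.
  apply (span_exp_class2 _ (j * e) m); auto.
  - apply central_tors_comm_gen.
  - intros s [x [y [-> [Dx|Dy]]]]; [apply tens_exp_l | apply tens_exp_r]; auto.
Qed.

End Level.
End ModelTheory.
End CrossedPairing.

(** * The nonabelian tensor square *)

Section TensorSquare.
Variables (G : Type) (mul : G -> G -> G) (inv : G -> G) (one : G).
Hypothesis HG : is_group G mul inv one.

Notation der := (derived G mul inv one).
Notation cj := (gconj G mul inv).
Notation gp := (gpow G mul one).
Notation TR := (tensor_rel G mul inv).

Definition tensor_square : sgroup := presented TR.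
Notation T := tensor_square.

Definition tens_letter (x y : G) : T := [(true, (x, y))].

Definition tact_word (a : G) (w : word (G * G)) : word (G * G) :=
  map (fun p => (fst p, (cj a (fst (snd p)), cj a (snd (snd p))))) w.

Lemma tact_word_app a u v : tact_word a (u ++ v) = tact_word a u ++ tact_word a v.
Proof. apply map_app. Qed.
Lemma tact_word_winv a u : tact_word a (winv u) = winv (tact_word a u).
Proof. unfold tact_word, winv. rewrite map_rev, !map_map. reflexivity. Qed.
Lemma tact_word_mul a b w : tact_word (mul a b) w = tact_word a (tact_word b w).
Proof.
  unfold tact_word. rewrite map_map. apply map_ext. intros [c [x y]]; simpl.
  rewrite !(gconjM _ _ _ _ HG). reflexivity.
Qed.
Lemma tact_word_one w : tact_word one w = w.
Proof.
  unfold tact_word. rewrite <- (map_id w) at 2. apply map_ext. intros [c [x y]]; simpl.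
  rewrite !(gconj1g _ _ _ _ HG). reflexivity.
Qed.

Lemma tensor_rel_tact a r : TR r -> TR (tact_word a r).
Proof.
  intros [[g [g' [h ->]]]|[g [h [h' ->]]]].
  - left. exists (cj a g), (cj a g'), (cj a h). unfold tact_word; simpl.
    rewrite (gconj_mul _ _ _ _ HG), !(gconj_conj _ _ _ _ HG a g). reflexivity.
  - right. exists (cj a g), (cj a h), (cj a h'). unfold tact_word; simpl.
    rewrite (gconj_mul _ _ _ _ HG), !(gconj_conj _ _ _ _ HG a h). reflexivity.
Qed.

Lemma peq_tact a u v : peq TR u v -> peq TR (tact_word a u) (tact_word a v).
Proof.
  induction 1.
  - apply peq_refl.
  - apply peq_sym; auto.
  - eapply peq_trans; eauto.
  - rewrite !tact_word_app. apply peq_cancel.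
  - rewrite !tact_word_app. apply peq_rel, tensor_rel_tact; auto.
Qed.

Lemma tens_letter_mul_l g g' h :
  tens_letter (mul g g') h ≈ tens_letter (cj g g') (cj g h) ⋅ tens_letter g h.
Proof.
  apply (mulIg (invg (tens_letter (cj g g') (cj g h) ⋅ tens_letter g h))). rewrite mulgV.
  change (peq TR ([] ++ [(true, (mul g g', h)); (false, (g, h));
                         (false, (cj g g', cj g h))] ++ []) ([] ++ [])).
  apply peq_rel. left; exists g, g', h; reflexivity.
Qed.
Lemma tens_letter_mul_r g h h' :
  tens_letter g (mul h h') ≈ tens_letter g h ⋅ tens_letter (cj h g) (cj h h').
Proof.
  apply (mulIg (invg (tens_letter g h ⋅ tens_letter (cj h g) (cj h h')))). rewrite mulgV.
  change (peq TR ([] ++ [(true, (g, mul h h')); (false, (cj h g, cj h h'));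
                         (false, (g, h))] ++ []) ([] ++ [])).
  apply peq_rel. right; exists g, h, h'; reflexivity.
Qed.

Definition tensor_square_model : tensor_model G mul inv one.
Proof.
  refine (TensorModel G mul inv one T tens_letter tact_word _ _ _ _ _ _
    tens_letter_mul_l tens_letter_mul_r _).
  - intros a u v; apply peq_tact.
  - intros a u v; simpl; rewrite tact_word_app; apply peq_refl.
  - intros a u; simpl; rewrite tact_word_winv; apply peq_refl.
  - reflexivity.
  - intros a b w; rewrite tact_word_mul; reflexivity.
  - intro w; rewrite tact_word_one; reflexivity.
  - intros P _ P1 Pgen PM PV w.
    induction w as [|[[|] [a b]] w IH]; [exact P1| |].
    + exact (PM (tens_letter a b) w (Pgen a b) IH).
    + exact (PM (invg (tens_letter a b)) w (PV _ (Pgen a b)) IH).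
Defined.

Definition level (i : nat) : T -> Prop := span (tens_gen G mul inv one tens_letter i).

Lemma level_tact i a x : level i x -> level i (tact_word a x).
Proof.
  induction 1 as [x [p [q [-> D]]]| |x y _ IHx _ IHy|x _ IHx|x y E _ IHx].
  - apply span_base. exists (cj a p), (cj a q). split; [reflexivity|].
    destruct D; [left|right]; apply derived_conj; auto.
  - exact (span_one _).
  - change (level i (tact_word a (x ++ y))). rewrite tact_word_app.
    apply (span_mul _ _ _ IHx IHy).
  - change (level i (tact_word a (winv x))). rewrite tact_word_winv. apply (span_inv _ _ IHx).
  - eapply span_eq; [apply peq_tact, E | exact IHx].
Qed.

Lemma level_conj i (a x : T) :
  level i x -> level i (a ⋅ x ⋅ invg a) /\ level i (invg a ⋅ x ⋅ a).
Proof.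
  revert x. pattern a. revert a. apply (tens_ind _ _ _ _ tensor_square_model).
  - intros a b E. setoid_rewrite E. reflexivity.
  - intros x Hx. sg_simpl. auto.
  - intros a b x Hx.
    rewrite (conj_tens _ _ _ _ HG tensor_square_model).
    rewrite (conjV_tens _ _ _ _ HG tensor_square_model).
    split; apply level_tact; auto.
  - intros a b Pa Pb x Hx. split.
    + generalize (proj1 (Pa _ (proj1 (Pb x Hx)))). sg_simpl. auto.
    + generalize (proj2 (Pb _ (proj2 (Pa x Hx)))). sg_simpl. auto.
  - intros a Pa x Hx. rewrite invgK. destruct (Pa x Hx). split; assumption.
Qed.

Lemma level_normal i : normal_subgroup (level i).
Proof.
  split.
  - apply span_proper.
  - apply span_one.
  - apply span_mul.
  - apply span_inv.
  - intros a x Hx. apply (level_conj i a x Hx).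
Qed.

Section LevelQuotient.
Variable i : nat.

Definition level_quot : sgroup := quot (level (S i)) (level_normal (S i)).

Lemma level_quot_of (x y : T) : x ≈ y -> @sg_eq level_quot x y.
Proof. apply quot_eq_of. Qed.

Definition level_quot_model : tensor_model G mul inv one.
Proof.
  refine (TensorModel G mul inv one level_quot tens_letter tact_word _ _ _ _ _ _ _ _ _).
  - intros a x y E. simpl in *. rewrite <- tact_word_winv, <- tact_word_app.
    apply level_tact, E.
  - intros; apply level_quot_of, (tactM _ _ _ _ tensor_square_model).
  - intros; apply level_quot_of, (tactV _ _ _ _ tensor_square_model).
  - intros; apply level_quot_of, (tact_tens _ _ _ _ tensor_square_model).
  - intros; apply level_quot_of, (tact_mul _ _ _ _ tensor_square_model).
  - intros; apply level_quot_of, (tact_one _ _ _ _ tensor_square_model).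
  - intros; apply level_quot_of, (tens_mul_l _ _ _ _ tensor_square_model).
  - intros; apply level_quot_of, (tens_mul_r _ _ _ _ tensor_square_model).
  - intros P HP. apply (tens_ind _ _ _ _ tensor_square_model).
    intros x y E. apply HP, level_quot_of, E.
Defined.

Lemma level_quot_tens_triv x y :
  der (S i) x \/ der (S i) y -> @sg_eq level_quot (tens_letter x y) oneg.
Proof. intro D. apply quot_eq1, span_base. exists x, y; auto. Qed.

Lemma level_quot_expg_eq1 (x : T) n :
  @sg_eq level_quot (@expg level_quot x n) oneg <-> level (S i) (x ^+ n).
Proof. unfold level_quot. rewrite quot_eq1, expg_quot. reflexivity. Qed.

End LevelQuotient.

Lemma level0_full t : level 0 t.
Proof.
  revert t. apply (tens_ind _ _ _ _ tensor_square_model).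
  - apply span_proper.
  - apply span_one.
  - intros a b. apply span_base. exists a, b. split; [reflexivity | left; constructor].
  - apply span_mul.
  - apply span_inv.
Qed.

Section Exponent.
Variable e : nat.
Hypothesis He : forall x, gp x e = one.

Lemma level_step i m j :
  (forall a b, der i a -> der i b -> der 1 b -> level (S i) (tens_letter a b ^+ m)) ->
  Nat.divide m (j * binom2 e) -> Nat.divide m (binom2 (j * e)) ->
  forall t, level i t -> level (S i) (t ^+ (j * e)).
Proof.
  intros Hm Hjm Hjem t Ht.
  apply level_quot_expg_eq1.
  apply (span_tens_gen_exp _ _ _ _ HG (level_quot_model i) i (level_quot_tens_triv i) e He m).
  - intros a b Da Db D1b. apply level_quot_expg_eq1. auto.
  - exact Hjm.
  - exact Hjem.
  - exact (span_quot _ _ _ _ Ht).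
Qed.

Lemma level_step_exp i j :
  Nat.divide e (j * binom2 e) -> Nat.divide e (binom2 (j * e)) ->
  forall t, level i t -> level (S i) (t ^+ (j * e)).
Proof.
  apply level_step. intros a b Da Db _.
  apply level_quot_expg_eq1.
  exact (tens_exp _ _ _ _ HG (level_quot_model i) i (level_quot_tens_triv i) e He a b Da Db).
Qed.

(* [level 0 / level 1] is abelian, so no factor 2 is needed at the first step. *)
Lemma level0_step t : level 0 t -> level 1 (t ^+ e).
Proof.
  rewrite <- (Nat.mul_1_l e). apply (level_step 0 1 1).
  - intros a b _ _ D1b. rewrite expg1. apply span_base. exists a, b; auto.
  - apply Nat.divide_1_l.
  - apply Nat.divide_1_l.
Qed.

Lemma level_exp_odd : Nat.Odd e -> forall i t, level i (t ^+ (e ^ i)).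
Proof.
  intros Ho i; induction i as [|i IHi]; intro t; [apply level0_full|].
  replace (e ^ S i) with (e ^ i * (1 * e)) by (simpl; ring).
  rewrite expgM. apply level_step_exp; [| | apply IHi];
    rewrite Nat.mul_1_l; apply dvd_binom2_odd, Ho.
Qed.

(* This bound holds for every e; parity only matters for [level_exp_odd]. *)
Lemma level_exp_even : forall i t, level i (t ^+ (2 ^ (i - 1) * e ^ i)).
Proof.
  intros [|i] t; [apply level0_full|]. simpl (S i - 1). rewrite Nat.sub_0_r.
  revert t; induction i as [|i IHi]; intro t.
  - rewrite Nat.mul_1_l, Nat.pow_1_r. apply level0_step, level0_full.
  - replace (2 ^ S i * e ^ S (S i)) with (2 ^ i * e ^ S i * (2 * e)) by (simpl; ring).
    rewrite expgM. apply level_step_exp; [| | apply IHi].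
    + apply dvd_double_binom2.
    + apply dvd_binom2_double.
Qed.
End Exponent.

Lemma level_trivial d t : (forall x, der d x -> x = one) -> level d t -> t ≈ oneg.
Proof.
  intros Hd. induction 1 as [x [p [q [-> [D|D]]]]| |x y _ IHx _ IHy|x _ IHx|x y E _ IHx].
  - apply Hd in D; subst. apply (tens1g _ _ _ _ HG tensor_square_model).
  - apply Hd in D; subst. apply (tensg1 _ _ _ _ HG tensor_square_model).
  - reflexivity.
  - rewrite IHx, IHy. apply mul1g.
  - rewrite IHx. apply invg1.
  - rewrite <- E; exact IHx.
Qed.

Lemma tensor_exp_dvd_of_level d N : (forall x, der d x -> x = one) ->
  (forall t, level d (t ^+ N)) -> tensor_exp_dvd G mul inv N.
Proof. intros Hd HN w. rewrite (wpow_expg TR). apply (level_trivial d); auto. Qed.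

End TensorSquare.

(** * The Schur multiplier *)

Section SchurMultiplier.
Variables (G : Type) (mul : G -> G -> G) (inv : G -> G) (one : G).
Hypothesis HG : is_group G mul inv one.

Notation ev := (eval G mul inv one).
Notation cj := (gconj G mul inv).
Notation FR := (in_FR G mul inv one).

Definition free_group : sgroup := presented (@no_rel G).
Notation F := free_group.

Lemma eval_app u v : ev (u ++ v) = mul (ev u) (ev v).
Proof.
  induction u as [|[b a] u IH]; simpl; [|rewrite IH]; grp_simpl HG; reflexivity.
Qed.
Lemma eval_winv u : ev (winv u) = inv (ev u).
Proof.
  induction u as [|[b a] u IH]; simpl; [grp_simpl HG; reflexivity|].
  rewrite winv_cons, eval_app, IH. destruct b; simpl; grp_simpl HG; reflexivity.
Qed.

#[local] Instance in_FR_proper : Proper (@sg_eq F ==> iff) FR.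
Proof. intros x y E; split; apply gen_peq; [exact E | exact (peq_sym _ _ _ E)]. Qed.

Lemma wcomm_commg (u v : F) : wcomm u v = commg u v.
Proof. unfold wcomm, commg; simpl; rewrite !app_assoc; reflexivity. Qed.

Lemma in_FR_comm (a r : F) : ev r = one -> FR (commg a r).
Proof. intro Er. rewrite <- wcomm_commg. apply gen_base. exists a, r. auto. Qed.

Lemma in_FR_one : FR (@oneg F).
Proof. apply gen_nil. Qed.
Lemma in_FR_mul (x y : F) : FR x -> FR y -> FR (x ⋅ y).
Proof. apply gen_app. Qed.
Lemma in_FR_inv (x : F) : FR x -> FR (invg x).
Proof. apply gen_inv. Qed.

Lemma in_FR_normal : normal_subgroup (H := F) FR.
Proof.
  split; [exact in_FR_proper | exact in_FR_one | exact in_FR_mul | exact in_FR_inv|].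
  intros a x. induction 1 as [x [u [r [Er ->]]]| |u v _ IHu _ IHv|u _ IHu|u v E _ IHu].
  - generalize (in_FR_mul _ _ (in_FR_comm (a ⋅ u) r Er) (in_FR_inv _ (in_FR_comm a r Er))).
    rewrite (wcomm_commg (u : F) (r : F)). unfold commg. sg_simpl. exact id.
  - generalize in_FR_one. sg_simpl. exact id.
  - change (FR (a ⋅ ((u : F) ⋅ v) ⋅ invg a)).
    generalize (in_FR_mul _ _ IHu IHv). sg_simpl. exact id.
  - change (FR (a ⋅ invg (u : F) ⋅ invg a)).
    generalize (in_FR_inv _ IHu). sg_simpl. exact id.
  - rewrite <- (E : @sg_eq F u v). exact IHu.
Qed.

(* F / [F, R], where F is free on G and R is the kernel of [eval]. *)
Definition hopf_quot : sgroup := quot (H := F) FR in_FR_normal.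
Notation Q := hopf_quot.

Lemma central_of_eval_one (r : Q) : ev r = one -> central r.
Proof.
  intros Er a. change (FR ((r : F) ⋅ a ⋅ invg ((a : F) ⋅ r))).
  generalize (in_FR_inv _ (in_FR_comm a r Er)). unfold commg. sg_simpl. exact id.
Qed.

Lemma commg_eval (u u' w w' : Q) : ev u = ev u' -> ev w = ev w' -> commg u w ≈ commg u' w'.
Proof.
  intros Eu Ew.
  assert (central_div : forall v v' : Q, ev v = ev v' -> central (invg v' ⋅ v)).
  { intros v v' E. apply central_of_eval_one. simpl.
    rewrite eval_app, eval_winv, E. apply (grp_mulVl _ _ _ _ HG). }
  transitivity (commg (u' ⋅ (invg u' ⋅ u)) (w' ⋅ (invg w' ⋅ w)));
    [sg_simpl; reflexivity|].
  rewrite commg_mul_central_l, commg_mul_central_r by (apply central_div; assumption).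
  reflexivity.
Qed.

Definition gen_comm (x y : G) : Q := commg ([(true, x)] : Q) [(true, y)].

Ltac eval_simpl := simpl; rewrite ?eval_app, ?eval_winv; simpl; grp_simpl HG; reflexivity.

Lemma gen_comm_mul_l g g' h :
  gen_comm (mul g g') h ≈ gen_comm (cj g g') (cj g h) ⋅ gen_comm g h.
Proof.
  set (x := [(true, g)] : Q). set (y := [(true, g')] : Q). set (z := [(true, h)] : Q).
  transitivity (commg (x ⋅ y) z); [apply commg_eval; eval_simpl|].
  transitivity (commg (x ⋅ y ⋅ invg x) (x ⋅ z ⋅ invg x) ⋅ commg x z);
    [unfold commg; sg_simpl; reflexivity|].
  apply mulg_proper; [apply commg_eval; eval_simpl | reflexivity].
Qed.

Lemma gen_comm_mul_r g h h' :
  gen_comm g (mul h h') ≈ gen_comm g h ⋅ gen_comm (cj h g) (cj h h').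
Proof.
  set (x := [(true, g)] : Q). set (y := [(true, h)] : Q). set (z := [(true, h')] : Q).
  transitivity (commg x (y ⋅ z)); [apply commg_eval; eval_simpl|].
  transitivity (commg x y ⋅ commg (y ⋅ x ⋅ invg y) (y ⋅ z ⋅ invg y));
    [unfold commg; sg_simpl; reflexivity|].
  apply mulg_proper; [reflexivity | apply commg_eval; eval_simpl].
Qed.

Definition gen_comm_pair (p : G * G) : Q := gen_comm (fst p) (snd p).

Lemma weval_tensor_rel r : tensor_rel G mul inv r -> weval gen_comm_pair r ≈ oneg.
Proof.
  intros [[g [g' [h ->]]]|[g [h [h' ->]]]]; cbn [weval]; unfold gen_comm_pair; cbn [fst snd].
  - rewrite gen_comm_mul_l. sg_simpl. reflexivity.
  - rewrite gen_comm_mul_r. sg_simpl. reflexivity.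
Qed.

Lemma in_FF_weval w : in_FF G w -> exists t, @sg_eq Q w (weval gen_comm_pair t).
Proof.
  induction 1 as [w [u [v ->]]| |u v _ [t1 E1] _ [t2 E2]|u _ [t E]|u v Euv _ [t E]].
  - exists [(true, (ev u, ev v))]. cbn [weval]. unfold gen_comm_pair; cbn [fst snd].
    rewrite (mulg1 (gen_comm _ _)), (wcomm_commg (u : F) v).
    apply commg_eval; simpl; rewrite (grp_mul1r _ _ _ _ HG); reflexivity.
  - exists []. reflexivity.
  - exists (t1 ++ t2). rewrite weval_app, <- E1, <- E2. reflexivity.
  - exists (winv t). rewrite weval_winv, <- E. reflexivity.
  - exists t. rewrite <- E. symmetry. apply (quot_eq_of (H := F)), Euv.
Qed.

Lemma schur_exp_dvd_of_tensor N :
  tensor_exp_dvd G mul inv N -> schur_exp_dvd G mul inv one N.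
Proof.
  intros HT w Hw _. destruct (in_FF_weval w Hw) as [t Et].
  apply (quot_eq1 (H := F) _ in_FR_normal).
  rewrite (wpow_expg no_rel), <- (expg_quot (H := F) _ in_FR_normal).
  change (@expg Q w N ≈ oneg). rewrite Et, <- weval_wpow.
  exact (weval_peq _ gen_comm_pair weval_tensor_rel _ _ (HT t)).
Qed.

End SchurMultiplier.

Theorem theorem6p3 (G : Type) (mul : G -> G -> G) (inv : G -> G) (one : G)
  (HG : is_group G mul inv one) (d e : nat)
  (Hd : derived_length G mul inv one d) (He : exponent G mul one e) :
  (Nat.Odd e ->
     tensor_exp_dvd G mul inv (e ^ d) /\ schur_exp_dvd G mul inv one (e ^ d)) /\
  (Nat.Even e ->
     tensor_exp_dvd G mul inv (2 ^ (d - 1) * e ^ d) /\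
     schur_exp_dvd G mul inv one (2 ^ (d - 1) * e ^ d)).
Proof.
  destruct Hd as [Hsolv _]. destruct He as [_ [Hexp _]].
  assert (Hboth : forall N, (forall t, level G mul inv one d (t ^+ N)) ->
            tensor_exp_dvd G mul inv N /\ schur_exp_dvd G mul inv one N).
  { intros N HN.
    assert (HT : tensor_exp_dvd G mul inv N)
      by exact (tensor_exp_dvd_of_level G mul inv one HG d N Hsolv HN).
    split; [exact HT | exact (schur_exp_dvd_of_tensor G mul inv one HG N HT)]. }
  split.
  - intro Hodd. apply Hboth, level_exp_odd; assumption.
  - intros _. apply Hboth, level_exp_even; assumption.
Qed.
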